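(* Let $L_1, M_1, L_2, M_2$ be Lagrangian subspaces of $(\mathbf R^{2n},\omega)$ such that $L_1, M_1, L_2$ are pairwise transverse and $M_2$ is transverse to $L_1$. If the Maslov form $[L_1,M_1,L_2]$ is positive definite, then the cross ratio $[L_1,M_1,L_2,M_2]$ is a diagonalizable endomorphism of $L_1$. If moreover $M_2$ is transverse to $L_2$ and the Maslov form $[L_2,M_2,L_1]$ is also positive definite, then $[L_1,M_1,L_2,M_2]$ has positive eigenvalues.
   Context: $\omega$ is the standard symplectic form on $\mathbf R^{2n}$, $\omega(x,y)={}^T x\begin{pmatrix}0&\mathrm{Id}\\-\mathrm{Id}&0\end{pmatrix}y$. A Lagrangian is an $n$-dimensional subspace on which $\omega$ vanishes; two Lagrangians are transverse if they intersect trivially. If $M$ is a Lagrangian transverse to a Lagrangian $L_2$ and $L_1$ is a Lagrangian transverse to $L_2$, there is a unique linear map $M_{L_1\to L_2}\colon L_1\to L_2$ with $M=\{e+M_{L_1\to L_2}(e): e\in L_1\}$. For pairwise transverse Lagrangians $L_1,M,L_2$ the Maslov form $[L_1,M,L_2]$ is the (symmetric, nondegenerate) bilinear form on $L_1$ given by $(v,w)\mapsto \omega(v, M_{L_1\to L_2}(w))$. The cross ratio is the endomorphism $[L_1,M_1,L_2,M_2]\mathrel{:=} -\,(M_2)_{L_2\to L_1}\circ (M_1)_{L_1\to L_2}$ of $L_1$. *)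

(* Vectors of R^{2n} are row vectors 'rV[R]_(n + n);
   linear subspaces are represented by square matrices 'M[R]_(n + n) via
   their row space (mxalgebra, scope %MS). Linear maps act on the right:
   the image of a row vector e under the map with matrix A is e *m A. *)
From HB Require Import structures.
From mathcomp Require Import all_boot all_order all_algebra.
From mathcomp Require Import reals.
Set Implicit Arguments. Unset Strict Implicit. Unset Printing Implicit Defensive.
Import Order.TTheory GRing.Theory Num.Theory.
Local Open Scope ring_scope.

Section Symplectic.
Variables (R : realType) (n : nat).

Definition Jmx : 'M[R]_(n + n) := block_mx 0 1%:M (- 1%:M) 0.

Definition omega (x y : 'rV[R]_(n + n)) : R := (x *m Jmx *m y^T) 0 0.

Definition lagrangian (L : 'M[R]_(n + n)) : Prop :=
  \rank L = n /\
  forall u v : 'rV[R]_(n + n), (u <= L)%MS -> (v <= L)%MS -> omega u v = 0.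

Definition transverse (L M : 'M[R]_(n + n)) : Prop := (L :&: M <= (0 : 'M[R]_(n + n)))%MS.

(* M_{L1 -> L2}: for M, L1 transverse to L2, the linear map L1 -> L2 with
   M = { e + M_{L1->L2}(e) : e in L1 }.  Concretely, e = a + b with a in L2,
   b in M (decomposition along the direct sum L2 (+) M = R^{2n}), and
   M_{L1->L2}(e) = -a, the unique f in L2 with e + f in M.  proj_mx L2 M is
   the projection onto L2 along M. (Only its restriction to L1 matters.) *)
Definition graph_map (M L1 L2 : 'M[R]_(n + n)) : 'M[R]_(n + n) :=
  - proj_mx L2 M.

Definition maslov_form (L1 M L2 : 'M[R]_(n + n)) (v w : 'rV[R]_(n + n)) : R :=
  omega v (w *m graph_map M L1 L2).

Definition pos_def_on (U : 'M[R]_(n + n))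
    (b : 'rV[R]_(n + n) -> 'rV[R]_(n + n) -> R) : Prop :=
  forall v : 'rV[R]_(n + n), (v <= U)%MS -> v != 0 -> 0 < b v v.

(* Cross ratio [L1, M1, L2, M2] := - (M2)_{L2->L1} o (M1)_{L1->L2},
   an endomorphism of L1 (row-vector convention: e |-> e *m C). *)
Definition cross_ratio (L1 M1 L2 M2 : 'M[R]_(n + n)) : 'M[R]_(n + n) :=
  - (graph_map M1 L1 L2 *m graph_map M2 L2 L1).

(* The endomorphism e |-> e *m C of the subspace U is diagonalizable:
   U has a basis (the rows of B) consisting of eigenvectors of C. *)
Definition diagonalizable_on (U C : 'M[R]_(n + n)) : Prop :=
  exists (B : 'M[R]_(\rank U, n + n)) (d : 'rV[R]_(\rank U)),
    (B == U)%MS /\ B *m C = diag_mx d *m B.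

Definition pos_eigenvalues_on (U C : 'M[R]_(n + n)) : Prop :=
  forall (lambda : R) (v : 'rV[R]_(n + n)),
    (v <= U)%MS -> v != 0 -> v *m C = lambda *: v -> 0 < lambda.

End Symplectic.

From HB Require Import structures.
From mathcomp Require Import all_boot all_order all_algebra.
From mathcomp Require Import reals complex.
Set Implicit Arguments. Unset Strict Implicit. Unset Printing Implicit Defensive.
Import Order.TTheory GRing.Theory Num.Theory Num.Def.
Local Open Scope ring_scope.

(* The Maslov form [L1, M1, L2] is symmetric on L1 because M1 is Lagrangian,
   and with G1 := (M1)_{L1->L2} and C the cross ratio one has
     [L1, M1, L2](v, C w) = [L2, M2, L1](G1 v, G1 w),
   whose right-hand side is again symmetric.  So C is self-adjoint for
   [L1, M1, L2]; when that form is positive definite, C is a self-adjoint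
   operator of a Euclidean space, hence diagonalizable.  For an eigenvector v
   of eigenvalue a the identity reads
     a [L1, M1, L2](v, v) = [L2, M2, L1](G1 v, G1 v),
   and G1 v <> 0 since M1 is transverse to L1, so a > 0 when both forms are
   positive definite.  Diagonalizability of self-adjoint operators is obtained
   by complexifying, applying the spectral theorem twice (to the Gram matrix,
   then to the operator in an orthonormal basis), and returning to a real base
   change. *)

Lemma mulmx3E (F : comPzRingType) m k l (X : 'M[F]_(m, k)) (G : 'M[F]_k)
    (Y : 'M[F]_(k, l)) i j :
  (X *m G *m Y) i j = (row i X *m G *m col j Y) 0 0.
Proof.
rewrite !mxE; apply: eq_bigr => a _; rewrite !mxE; congr (_ * _).
by apply: eq_bigr => b _; rewrite !mxE.
Qed.

Lemma trmx11 (F : nmodType) (M : 'M[F]_1) : M^T = M.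
Proof. by rewrite {1}[M]mx11_scalar tr_scalar_mx -mx11_scalar. Qed.

Lemma trmx_form_sym (F : comPzRingType) m (G : 'M[F]_m) (x y : 'rV[F]_m) :
  G^T = G -> y *m G *m x^T = x *m G *m y^T.
Proof. by move=> Gs; rewrite -[LHS]trmx11 !trmx_mul trmxK Gs mulmxA. Qed.

Section PosdefComplex.
Variable C : numClosedFieldType.
Local Open Scope sesquilinear_scope.

Lemma realsym_form_rect m (G : 'M[C]_m) (x y : 'rV[C]_m) :
  G^T = G -> x \is a realmx -> y \is a realmx ->
  ((x + 'i *: y) *m G *m (x + 'i *: y)^t*) 0 0 =
  (x *m G *m x^T) 0 0 + (y *m G *m y^T) 0 0.
Proof.
move=> Gs /mxOverP xr /mxOverP yr; rewrite -map_trmx.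
have -> : (x + 'i *: y) ^ conjC = x - 'i *: y.
  by apply/matrixP => i j; rewrite !mxE conjC_rect.
rewrite linearB /= linearZ /= !mulmxDl !mulmxBr -!scalemxAl -!scalemxAr.
rewrite (trmx_form_sym y x Gs).
have ii : 'i * 'i = -1 :> C by rewrite -expr2 sqrCi.
by rewrite addrA subrK scalerA ii scaleN1r opprK mxE.
Qed.

Lemma posdef_complexify m (G : 'M[C]_m) : G^T = G ->
  (forall x : 'rV[C]_m, x \is a realmx -> x != 0 -> 0 < (x *m G *m x^T) 0 0) ->
  forall z : 'rV[C]_m, z != 0 -> 0 < (z *m G *m z^t*) 0 0.
Proof.
move=> Gs Gpos z z0; pose x := z ^ (@Re C); pose y := z ^ (@Im C).
have xr : x \is a realmx by apply/mxOverP => i j; rewrite mxE Creal_Re.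
have yr : y \is a realmx by apply/mxOverP => i j; rewrite mxE Creal_Im.
have zE : z = x + 'i *: y by apply/matrixP => i j; rewrite !mxE -Crect.
have Gge0 (u : 'rV[C]_m) : u \is a realmx -> 0 <= (u *m G *m u^T) 0 0.
  have [->|u0 ur] := eqVneq u 0; first by rewrite !mul0mx mxE.
  exact: ltW (Gpos u ur u0).
rewrite zE realsym_form_rect //.
have [x0|x0] := eqVneq x 0; last by rewrite ltr_wpDr ?Gge0 ?Gpos.
have y0 : y != 0 by apply: contraNneq z0 => y0; rewrite zE x0 y0 scaler0 addr0.
by rewrite x0 !mul0mx mxE add0r Gpos.
Qed.

Lemma adjmxM m k p (A : 'M[C]_(m, k)) (B : 'M[C]_(k, p)) :
  (A *m B)^t* = B^t* *m A^t*.
Proof. by rewrite trmx_mul map_mxM. Qed.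

Lemma adjmx_hermsym m (S : 'M[C]_m) : S^t* = S -> S \is hermsymmx.
Proof. by move=> SE; apply/is_hermitianmxP; rewrite expr0 scale1r SE. Qed.

Lemma hermitian_posdef_factor m (G : 'M[C]_m) : G^t* = G ->
  (forall z : 'rV[C]_m, z != 0 -> 0 < (z *m G *m z^t*) 0 0) ->
  exists T : 'M[C]_m, G *m T^t* *m T = 1%:M.
Proof.
move=> /adjmx_hermsym Gh Gpos.
pose P := spectralmx G; pose d := spectral_diag G.
have Pu : P \is unitarymx := spectral_unitarymx G.
have PPt : P *m P^t* = 1%:M by apply/unitarymxP.
have GE : G = P^t* *m diag_mx d *m P.
  by rewrite -invmx_unitary //; exact/orthomx_spectralP/hermitian_normalmx.
have dr : d \is a realmx := hermitian_spectral_diag_real Gh.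
have d_gt0 i : 0 < d 0 i.
  have -> : d 0 i = (P *m G *m P^t*) i i.
    by rewrite GE !mulmxA PPt mul1mx -mulmxA PPt mulmx1 mxE eqxx mulr1n.
  rewrite mulmx3E -map_col -tr_row Gpos //; apply/eqP => Pi0.
  move/(congr1 (row i)): PPt; rewrite row_mul Pi0 mul0mx => /matrixP/(_ 0 i).
  by rewrite !mxE eqxx => /eqP; rewrite eq_sym oner_eq0.
pose s := \row_i sqrtC (d 0 i)^-1.
have s_real : s \is a realmx.
  by apply/mxOverP => i j; rewrite mxE ger0_real // sqrtC_ge0 invr_ge0 ltW.
have dss : diag_mx d *m diag_mx s *m diag_mx s = 1%:M.
  rewrite !mulmx_diag -diag_const_mx; congr diag_mx; apply/matrixP => i j.
  by rewrite !mxE -mulrA -expr2 sqrtCK mulfV // gt_eqF.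
exists (diag_mx s *m P).
rewrite adjmxM tr_diag_mx map_diag_mx (realmxC s_real) GE.
rewrite -!mulmxA (mulmxA P) PPt mul1mx (mulmxA (diag_mx d)).
rewrite (mulmxA (diag_mx d *m diag_mx s)) dss mul1mx.
exact: mulmx1C.
Qed.

Lemma selfadjoint_similar_diag m (A G : 'M[C]_m) : G^t* = G ->
  (forall z : 'rV[C]_m, z != 0 -> 0 < (z *m G *m z^t*) 0 0) ->
  (A *m G)^t* = A *m G ->
  exists2 e : 'rV[C]_m, e \is a realmx & similar_in unitmx A (diag_mx e).
Proof.
(* In the coordinates given by T, where G becomes the identity, the
   G-self-adjoint A becomes the Hermitian matrix S. *)
move=> Gh Gpos AGh; have [T GTT] := hermitian_posdef_factor Gh Gpos.
have Tu : T \in unitmx by case: (mulmx1_unit GTT).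
pose S := T *m (A *m G) *m T^t*.
have /adjmx_hermsym Sh : S^t* = S by rewrite adjmxM trmxCK adjmxM AGh mulmxA.
pose Q := spectralmx S; pose e := spectral_diag S.
have SE : S = invmx Q *m diag_mx e *m Q.
  exact/orthomx_spectralP/hermitian_normalmx.
have Qu : Q \in unitmx := spectral_unit S.
exists e; first exact: hermitian_spectral_diag_real.
have QTu : Q *m T \in unitmx by rewrite unitmx_mul Qu Tu.
exists (Q *m T) => //; apply/(similarP QTu).
have -> : Q *m T *m A = Q *m S *m T by rewrite /S -[LHS]mulmx1 -GTT !mulmxA.
by rewrite SE !mulmxA mulmxV // mul1mx.
Qed.

End PosdefComplex.

Section RealDiagonalization.
Variable R : rcfType.
Local Notation c := (@real_complex R).
Local Open Scope sesquilinear_scope.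

Lemma real_complex_realmx m k (M : 'M[R]_(m, k)) : map_mx c M \is a realmx.
Proof. by apply/mxOverP => i j; rewrite mxE complex_real. Qed.

Lemma realmx_complexK m k (M : 'M[R[i]]_(m, k)) :
  M \is a realmx -> map_mx c (map_mx (@complex.Re R) M) = M.
Proof. by move=> /mxOverP Mr; apply/matrixP => i j; rewrite !mxE RRe_real. Qed.

Lemma symmetric_posdef_diagonalizable m (A G : 'M[R]_m) :
  G^T = G -> (A *m G)^T = A *m G ->
  (forall x : 'rV[R]_m, x != 0 -> 0 < (x *m G *m x^T) 0 0) ->
  exists (Y : 'M[R]_m) (d : 'rV[R]_m), Y \in unitmx /\ Y *m A = diag_mx d *m Y.
Proof.
move=> Gs AGs Gpos; pose Ac := map_mx c A; pose Gc := map_mx c G.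
have adj_real (M : 'M[R]_m) : M^T = M -> (map_mx c M)^t* = map_mx c M.
  by move=> Ms; rewrite map_trmx realmxC ?real_complex_realmx // Ms.
have Gcpos (x : 'rV[R[i]]_m) : x \is a realmx -> x != 0 -> 0 < (x *m Gc *m x^T) 0 0.
  move=> /realmx_complexK <- x0; rewrite map_trmx -!map_mxM mxE -(rmorph0 c) ltcR.
  by apply: Gpos; apply: contraNneq x0 => ->; rewrite map_mx0.
have AGc : (Ac *m Gc)^t* = Ac *m Gc by rewrite -map_mxM adj_real.
have GcT : Gc^T = Gc by rewrite map_trmx Gs.
have [e e_real /real_similar] := selfadjoint_similar_diag (adj_real G Gs)
  (posdef_complexify GcT Gcpos) AGc.
case=> [||Y /andP[Yr Yu] /(similarP Yu) YA].
- exact: real_complex_realmx.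
- by rewrite mxOver_diag ?real0.
exists (map_mx (@complex.Re R) Y), (map_mx (@complex.Re R) e); split.
  by rewrite -(map_unitmx c) realmx_complexK.
apply: (@map_mx_inj _ _ c).
by rewrite !map_mxM map_diag_mx !realmx_complexK.
Qed.

Lemma trmx_gram N m (U B : 'M[R]_N) (K : 'M[R]_(m, N)) : (K <= U)%MS ->
  (forall u v : 'rV_N, (u <= U)%MS -> (v <= U)%MS ->
     (u *m B *m v^T) 0 0 = (v *m B *m u^T) 0 0) ->
  (K *m B *m K^T)^T = K *m B *m K^T.
Proof.
move=> KU Bsym; apply/matrixP => i j.
rewrite mxE [LHS]mulmx3E [RHS]mulmx3E -!tr_row.
by rewrite Bsym ?(submx_trans (row_sub _ _) KU).
Qed.

Lemma selfadjoint_diagonalizable_on N (U C B : 'M[R]_N) :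
  stablemx U C ->
  (forall u v : 'rV_N, (u <= U)%MS -> (v <= U)%MS ->
     (u *m B *m v^T) 0 0 = (v *m B *m u^T) 0 0) ->
  (forall u v : 'rV_N, (u <= U)%MS -> (v <= U)%MS ->
     (u *m C *m B *m v^T) 0 0 = (v *m C *m B *m u^T) 0 0) ->
  (forall u : 'rV_N, (u <= U)%MS -> u != 0 -> 0 < (u *m B *m u^T) 0 0) ->
  exists (P : 'M_(\rank U, N)) (d : 'rV_(\rank U)),
    (P == U)%MS /\ P *m C = diag_mx d *m P.
Proof.
move=> UC Bsym CBsym Bpos; pose K := row_base U.
have KU : (K :=: U)%MS := eq_row_base U.
have KsubU : (K <= U)%MS by rewrite KU.
have [Cr KC] : exists Cr : 'M_(\rank U), K *m C = Cr *m K.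
  by exists (restrictmx U C); rewrite mulmxKpV // stablemx_row_base.
have Kfree : row_free K := row_base_free U.
clearbody K.
have Gsym := trmx_gram KsubU Bsym.
have CGsym : (Cr *m (K *m B *m K^T))^T = Cr *m (K *m B *m K^T).
  have -> : Cr *m (K *m B *m K^T) = K *m (C *m B) *m K^T.
    by rewrite !mulmxA -KC.
  by apply: trmx_gram KsubU _ => u v uU vU; rewrite !mulmxA CBsym.
have Gpos (x : 'rV_(\rank U)) : x != 0 -> 0 < (x *m (K *m B *m K^T) *m x^T) 0 0.
  move=> x0; rewrite !mulmxA -(mulmxA _ K^T) -trmx_mul Bpos ?mulmx_free_eq0 //.
  exact: submx_trans (submxMl x K) KsubU.
have [Y [d [Yu YC]]] := symmetric_posdef_diagonalizable Gsym CGsym Gpos.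
exists (Y *m K), d; split.
  by apply/eqmxP; apply: eqmx_trans KU; apply: eqmxMfull; rewrite row_full_unit.
by rewrite -mulmxA KC !mulmxA YC.
Qed.

End RealDiagonalization.

Section Symplectic.
Variables (R : realType) (n : nat).
Local Notation V := 'rV[R]_(n + n).
Local Notation J := (Jmx R n).

Lemma trmx_Jmx : J^T = - J.
Proof.
rewrite /Jmx tr_block_mx opp_block_mx !trmx0 !oppr0 trmx1 linearN /= trmx1.
by rewrite opprK.
Qed.

Lemma omega_skew (u v : V) : omega u v = - omega v u.
Proof.
rewrite /omega -[u *m J *m v^T]trmx11 !trmx_mul trmxK.
by rewrite trmx_Jmx mulNmx mulmxN mulmxA [LHS]mxE.
Qed.

Lemma omegaDl (u1 u2 v : V) : omega (u1 + u2) v = omega u1 v + omega u2 v.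
Proof. by rewrite /omega !mulmxDl mxE. Qed.

Lemma omegaDr (u v1 v2 : V) : omega u (v1 + v2) = omega u v1 + omega u v2.
Proof. by rewrite /omega linearD /= mulmxDr mxE. Qed.

Lemma omegaZr (u v : V) a : omega u (a *: v) = a * omega u v.
Proof. by rewrite /omega linearZ /= -scalemxAr mxE. Qed.

Lemma omegaNr (u v : V) : omega u (- v) = - omega u v.
Proof. by rewrite -scaleN1r omegaZr mulN1r. Qed.

Lemma omega_mulmxr (u v : V) (G : 'M[R]_(n + n)) :
  omega u (v *m G) = (u *m (J *m G^T) *m v^T) 0 0.
Proof. by rewrite /omega trmx_mul !mulmxA. Qed.

Lemma lagrangian_transverse_full (L M : 'M[R]_(n + n)) :
  lagrangian L -> lagrangian M -> transverse L M -> row_full (L + M)%MS.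
Proof.
move=> [rL _] [rM _] LM; rewrite /row_full mxrank_disjoint_sum ?rL ?rM //.
by apply/eqP; rewrite -submx0.
Qed.

Section GraphMap.
Variables (M L1 L2 : 'M[R]_(n + n)).
Local Notation G := (graph_map M L1 L2).

Lemma graph_map_sub k (e : 'M[R]_(k, n + n)) : (e *m G <= L2)%MS.
Proof. by rewrite /graph_map mulmxN eqmx_opp proj_mx_sub. Qed.

Lemma graph_map_graph k (e : 'M[R]_(k, n + n)) :
  row_full (L2 + M)%MS -> ((e + e *m G)%R <= M)%MS.
Proof.
by move=> full; rewrite /graph_map mulmxN; apply: proj_mx_compl_sub; rewrite submx_full.
Qed.

Lemma graph_map_eq0 (v : V) : row_full (L2 + M)%MS -> transverse L1 M ->
  (v <= L1)%MS -> v != 0 -> v *m G != 0.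
Proof.
move=> full L1M vL1; apply: contraNneq => vG0.
have := graph_map_graph v full; rewrite vG0 addr0 => vM.
by rewrite -submx0 (submx_trans _ L1M) // sub_capmx vL1.
Qed.

Lemma maslov_formC (v w : V) :
  lagrangian L1 -> lagrangian L2 -> lagrangian M -> row_full (L2 + M)%MS ->
  (v <= L1)%MS -> (w <= L1)%MS -> maslov_form L1 M L2 v w = maslov_form L1 M L2 w v.
Proof.
move=> [_ L1iso] [_ L2iso] [_ Miso] full vL1 wL1; rewrite /maslov_form.
have := Miso _ _ (graph_map_graph v full) (graph_map_graph w full).
rewrite omegaDl !omegaDr (L1iso v w) // (L2iso (v *m G) (w *m G)) ?graph_map_sub //.
rewrite add0r addr0 [omega (v *m G) w]omega_skew => /eqP; rewrite subr_eq0.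
by move/eqP.
Qed.

End GraphMap.

Section CrossRatio.
Variables (L1 M1 L2 M2 : 'M[R]_(n + n)).
Hypotheses (lagL1 : lagrangian L1) (lagM1 : lagrangian M1).
Hypotheses (lagL2 : lagrangian L2) (lagM2 : lagrangian M2).
Hypotheses (fullL2M1 : row_full (L2 + M1)%MS) (fullL1M2 : row_full (L1 + M2)%MS).
Local Notation G1 := (graph_map M1 L1 L2).
Local Notation G2 := (graph_map M2 L2 L1).
Local Notation Cr := (cross_ratio L1 M1 L2 M2).

Lemma cross_ratio_sub k (e : 'M[R]_(k, n + n)) : (e *m Cr <= L1)%MS.
Proof. by rewrite /cross_ratio mulmxN eqmx_opp mulmxA graph_map_sub. Qed.

Lemma maslov_form_cross_ratio (v w : V) : (v <= L1)%MS -> (w <= L1)%MS ->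
  maslov_form L1 M1 L2 v (w *m Cr) = maslov_form L2 M2 L1 (v *m G1) (w *m G1).
Proof.
move=> vL1 wL1; rewrite maslov_formC ?cross_ratio_sub // /maslov_form.
by rewrite omega_skew /cross_ratio (mulmxN w) mulmxA omegaNr opprK.
Qed.

Lemma maslov_form_cross_ratioC (u v : V) : (u <= L1)%MS -> (v <= L1)%MS ->
  maslov_form L1 M1 L2 (u *m Cr) v = maslov_form L1 M1 L2 (v *m Cr) u.
Proof.
have formC := maslov_formC lagL1 lagL2 lagM1 fullL2M1.
move=> uL1 vL1; rewrite [LHS]formC ?cross_ratio_sub // [RHS]formC ?cross_ratio_sub //.
rewrite !maslov_form_cross_ratio //.
by rewrite (maslov_formC lagL2 lagL1 lagM2 fullL1M2) ?graph_map_sub.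
Qed.

Lemma cross_ratio_pos_eigenvalues : transverse L1 M1 ->
  pos_def_on L1 (maslov_form L1 M1 L2) -> pos_def_on L2 (maslov_form L2 M2 L1) ->
  pos_eigenvalues_on L1 Cr.
Proof.
move=> L1M1 pos1 pos2 a v vL1 v0 vCr.
have := pos2 _ (graph_map_sub _ _ _ v) (graph_map_eq0 fullL2M1 L1M1 vL1 v0).
rewrite -maslov_form_cross_ratio // vCr /maslov_form -scalemxAl omegaZr.
by rewrite pmulr_lgt0 //; exact: pos1.
Qed.

Lemma cross_ratio_diagonalizable :
  pos_def_on L1 (maslov_form L1 M1 L2) -> diagonalizable_on L1 Cr.
Proof.
move=> pos1; apply: (selfadjoint_diagonalizable_on (B := J *m G1^T)).
- exact: cross_ratio_sub.
- move=> u v uL1 vL1; rewrite -!omega_mulmxr.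
  exact: (maslov_formC lagL1 lagL2 lagM1 fullL2M1).
- move=> u v uL1 vL1; rewrite -!omega_mulmxr.
  exact: maslov_form_cross_ratioC.
- by move=> u uL1 u0; rewrite -omega_mulmxr pos1.
Qed.

End CrossRatio.
End Symplectic.

Theorem corollary3p4 (R : realType) (n : nat) (L1 M1 L2 M2 : 'M[R]_(n + n)) :
  lagrangian L1 -> lagrangian M1 -> lagrangian L2 -> lagrangian M2 ->
  transverse L1 M1 -> transverse M1 L2 -> transverse L1 L2 ->
  transverse M2 L1 ->
  pos_def_on L1 (maslov_form L1 M1 L2) ->
  diagonalizable_on L1 (cross_ratio L1 M1 L2 M2) /\
  (transverse M2 L2 -> pos_def_on L2 (maslov_form L2 M2 L1) ->
   pos_eigenvalues_on L1 (cross_ratio L1 M1 L2 M2)).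
Proof.
(* graph_map M L1 L2 is defined on the whole space as soon as M is transverse
   to L2. *)
move=> lagL1 lagM1 lagL2 lagM2 L1M1 M1L2 _ M2L1 pos1.
have fullL2M1 : row_full (L2 + M1)%MS.
  by apply: lagrangian_transverse_full => //; rewrite /transverse capmxC.
have fullL1M2 : row_full (L1 + M2)%MS.
  by apply: lagrangian_transverse_full => //; rewrite /transverse capmxC.
split; first exact: cross_ratio_diagonalizable.
move=> _ pos2; exact: cross_ratio_pos_eigenvalues.
Qed.
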